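(* Let $\mathbf{p}$ be a finite list of distinct predicate constants, and for each $p\in\mathbf{p}$ let $u_p$, $\widehat u_p$ be predicate variables of the same arity as $p$; let $\mathbf{u}$, $\widehat{\mathbf{u}}$ be the lists of these variables and $\neg\mathbf{p}$ the list of predicate expressions $\lambda\mathbf{x}\,\neg p(\mathbf{x})$ for $p\in\mathbf{p}$. Then the formula $(\mathbf{u},\widehat{\mathbf{u}})<(\mathbf{p},\neg\mathbf{p})$ is logically equivalent to $$\bigvee_{p\in\mathbf{p}}\Big(\big((\mathbf{u},\widehat{\mathbf{u}})\le(\mathbf{p},\neg\mathbf{p})\big)\land\exists\mathbf{x}\big(\neg u_p(\mathbf{x})\land\neg\widehat u_p(\mathbf{x})\big)\Big).$$
   Context: For predicates or predicate expressions $p,q$ of the same arity, $p\le q$ denotes $\forall\mathbf{x}(p(\mathbf{x})\to q(\mathbf{x}))$, where $\mathbf{x}$ is a tuple of distinct object variables. For tuples $\mathbf{p}=(p_1,\dots,p_n)$, $\mathbf{q}=(q_1,\dots,q_n)$, $\mathbf{p}\le\mathbf{q}$ denotes $(p_1\le q_1)\land\dots\land(p_n\le q_n)$ and $\mathbf{p}<\mathbf{q}$ denotes $(\mathbf{p}\le\mathbf{q})\land\neg(\mathbf{q}\le\mathbf{p})$. Here $(\mathbf{u},\widehat{\mathbf{u}})$ and $(\mathbf{p},\neg\mathbf{p})$ are concatenated tuples, with $\widehat u_p$ matched to $\lambda\mathbf{x}\neg p(\mathbf{x})$. *)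

From mathcomp Require Import all_boot.
Set Implicit Arguments. Unset Strict Implicit. Unset Printing Implicit Defensive.

Definition pred_le (A : Type) (P Q : A -> Prop) : Prop := forall x, P x -> Q x.

Definition fam_le (J : Type) (A : J -> Type) (P Q : forall j, A j -> Prop) : Prop :=
  forall j, pred_le (P j) (Q j).
Definition fam_lt (J : Type) (A : J -> Type) (P Q : forall j, A j -> Prop) : Prop :=
  fam_le P Q /\ ~ fam_le Q P.

(* arities of the concatenated list (indices inl i: first half, inr i: second) *)
Definition arS (n : nat) (ar : 'I_n -> nat) (j : 'I_n + 'I_n) : nat :=
  match j with inl i => ar i | inr i => ar i end.

Definition concat (D : Type) (n : nat) (ar : 'I_n -> nat)
  (P Q : forall i : 'I_n, (ar i).-tuple D -> Prop) :
  forall j : 'I_n + 'I_n, (arS ar j).-tuple D -> Prop :=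
  fun j => match j as j0 return (arS ar j0).-tuple D -> Prop with
           | inl i => P i | inr i => Q i end.

Definition negp (D : Type) (n : nat) (ar : 'I_n -> nat)
  (P : forall i : 'I_n, (ar i).-tuple D -> Prop) :
  forall i : 'I_n, (ar i).-tuple D -> Prop := fun i x => ~ P i x.

(** A strict inequality between predicate families means an inclusion together
    with a point of some component where the larger family holds and the
    smaller one fails.  For the family (p, ~p) bounding (u, uh), such a point
    is exactly a point where both u_p and uh_p fail: on one side, u_p <= p
    and uh_p <= ~p; on the other, whichever of p, ~p holds there witnesses
    the gap. *)
From Stdlib Require Import Classical.
From mathcomp Require Import all_boot.

Lemma fam_ltE (J : Type) (A : J -> Type) (P Q : forall j, A j -> Prop) :
  fam_lt P Q <-> fam_le P Q /\ exists j (x : A j), Q j x /\ ~ P j x.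
Proof.
split=> [[PleQ QnleP] | [PleQ [j [x [Qx nPx]]]]].
- split=> //; apply: NNPP => no_gap; apply: QnleP => j x Qx.
  by apply: NNPP => nPx; apply: no_gap; exists j, x.
- by split=> // QleP; exact: nPx (QleP j x Qx).
Qed.

Lemma concat_negp_gapE {D : Type} {n : nat} {ar : 'I_n -> nat}
    {p u uh : forall i : 'I_n, (ar i).-tuple D -> Prop} :
  fam_le (concat u uh) (concat p (negp p)) ->
  (exists j (x : (arS ar j).-tuple D),
     concat p (negp p) (j:=j) x /\ ~ concat u uh (j:=j) x) <->
  exists i x, ~ u i x /\ ~ uh i x.
Proof.
move=> le_upn; split.
- move=> [[i|i] [x [/= pnx nux]]]; exists i, x; split=> //.
  + by move=> /(le_upn (inr i)).
  + by move=> /(le_upn (inl i)).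
- move=> [i [x [nux nuhx]]].
  have [px | npx] := classic (p i x).
  + by exists (inl i), x.
  + by exists (inr i), x.
Qed.

Theorem lemma1 (D : Type) (n : nat) (ar : 'I_n -> nat)
  (p u uh : forall i : 'I_n, (ar i).-tuple D -> Prop) :
  fam_lt (concat u uh) (concat p (negp p)) <->
  exists i : 'I_n,
    fam_le (concat u uh) (concat p (negp p)) /\
    exists x : (ar i).-tuple D, ~ u i x /\ ~ uh i x.
Proof.
rewrite fam_ltE; split.
- move=> [le_upn /(concat_negp_gapE le_upn) [i [x gap]]].
  by exists i; split=> //; exists x.
- move=> [i [le_upn [x gap]]]; split=> //.
  by apply/(concat_negp_gapE le_upn); exists i, x.
Qed.
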